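(* Consider a D2D caching network with $K$ users each of cache size $M$ files, of which $S$ are selfish, and a library of $N$ files, encoded with an MDS code of rate $r\in(0,1)$ that is a real positive root of $\sum_{i=0}^{K-S-1}\binom{K-S}{i}(-\frac{M}{N})^{K-S-i}r^{K-S-1-i}+1$ (with $\frac{M(K-S)}{N}>1$), using the random caching scheme and delivery procedure described in the context. Then the following rate is achievable: $$R(M)=\frac{1}{r}\sum_{i=2}^{K}\mathsf{R}(i)\Big(\frac{Mr}{N}\Big)^{i-1}\Big(1-\frac{Mr}{N}\Big)^{K-i+1},$$ where $$\mathsf{R}(i)=\sum_{j=0}^{i-2}\binom{S}{j}\binom{K-S}{i-j}\frac{i-j}{i-j-1}+(K-S)\binom{S}{i-1}.$$
   Context: Network: $K$ users in mutual range, no server; $S$ selfish users cache content but never transmit; all users receive all transmissions; each user $u$ requests an arbitrary file $\omega_u$ (arbitrary request vector). Rate = total number of transmitted bits divided by the file size $B$. Caching: each file of $B$ bits is split into $I$ subfiles (symbols of $\mathbb{F}_{2^{B/I}}$) and encoded with an $(I,I/r)$ MDS code (any $I$ of the $I/r$ encoded symbols recover the file); each user independently, for each file, caches a uniformly random set of $MI/N$ of the $I/r$ encoded symbols. For a file $\omega$ and a set $\mathcal{P}$ of users, $\Gamma_{\omega,\mathcal{P}}$ denotes the block of encoded symbols of $\omega$ cached by exactly the users in $\mathcal{P}$; its length is taken to be its typical value $(\frac{Mr}{N})^{|\mathcal{P}|}(1-\frac{Mr}{N})^{K-|\mathcal{P}|}\frac{I}{r}$ symbols (law of large numbers, large $I$).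 XOR of blocks of unequal length is done after zero-padding the shorter ones. A $\frac1f$-segment of a block is one of $f$ disjoint equal-length parts; segments sent by different users are disjoint if they have different offsets. Delivery: for every subset $\mathsf{U}\subseteq\mathcal{U}$ with $|\mathsf{U}|\in\{K,K-1,\dots,2\}$ containing at least one non-selfish user, let $\mathcal{T}$ be its set of non-selfish users, $\mathsf{t}=|\mathcal{T}|$. If $\mathsf{t}=1$, the unique $u\in\mathcal{T}$ transmits $\bigoplus_{v\in\mathsf{U},v\ne u}\Gamma_{\omega_v,\mathsf{U}\setminus\{v\}}$. If $\mathsf{t}\ge2$, pick any $u^*\in\mathcal{T}$; $u^*$ transmits a disjoint $\frac{1}{\mathsf{t}-1}$-segment of $\bigoplus_{u\in\mathcal{T},u\ne u^*}\Gamma_{\omega_u,\mathsf{U}\setminus\{u\}}$, and each $u\in\mathcal{T}\setminus\{u^*\}$ transmits a disjoint $\frac{1}{\mathsf{t}-1}$-segment of $\bigoplus_{v\in\mathsf{U},v\ne u}\Gamma_{\omega_v,\mathsf{U}\setminus\{v\}}$. Achievability means that with this scheme every user recovers its requested file for every request vector, with total rate $R(M)$. *)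

(* Idealised ("typical block length") model of the D2D
   coded-caching scheme with selfish users. *)
From mathcomp Require Import all_boot all_order all_algebra.
Set Implicit Arguments. Unset Strict Implicit. Unset Printing Implicit Defensive.
Import Order.TTheory GRing.Theory Num.Theory.
Local Open Scope ring_scope.

Section Scheme.
Variables (K N : nat) (Sel : {set 'I_K}) (omega : 'I_K -> 'I_N)
          (ustar : {set 'I_K} -> 'I_K).

(* A term of an XOR: a (1/parts)-segment, with index offset, of the block
   Gamma_{file, P}:  (file, P, parts, offset). *)
Definition term := ('I_N * {set 'I_K} * nat * nat)%type.
Definition tfile (x : term) : 'I_N := x.1.1.1.
Definition tset (x : term) : {set 'I_K} := x.1.1.2.
Definition tparts (x : term) : nat := x.1.2.
Definition toff (x : term) : nat := x.2.

(* A transmission: (sender, list of XORed terms) *)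
Definition transmission := ('I_K * seq term)%type.

Definition nonselfish (U : {set 'I_K}) : {set 'I_K} := U :\: Sel.

Definition tx_of (U : {set 'I_K}) : seq transmission :=
  let T := nonselfish U in
  let t := #|T| in
  let us := ustar U in
  if t == 1%N then
    [:: (us, [seq (omega v, U :\ v, 1%N, 0%N) | v <- enum (U :\ us)])]
  else
    let Tr := enum (T :\ us) in
    (us, [seq (omega w, U :\ w, t.-1, index w Tr) | w <- Tr])
    :: [seq (u, [seq (omega v, U :\ v, t.-1, index u Tr) | v <- enum (U :\ u)])
       | u <- Tr].

Definition served_sets : seq {set 'I_K} :=
  [seq U : {set 'I_K} <- enum [set: {set 'I_K}] | (2 <= #|U|)%N && (nonselfish U != set0)].

Definition delivery : seq transmission := flatten [seq tx_of U | U <- served_sets].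

(* user u caches Gamma_{f,P} (for every file f) iff u \in P.
   u decodes term x of tx iff x occurs in tx and u caches every other term. *)
Definition decodes (u : 'I_K) (tx : transmission) (x : term) : bool :=
  (x \in tx.2) && all (fun y => (y == x) || (u \in tset y)) tx.2.

Definition all_parts : seq nat := [seq tparts x | x <- flatten [seq tx.2 | tx <- delivery]].

(* user u knows the whole block Gamma_{f,P}: cached, or all p disjoint
   1/p-segments decoded from the transmissions. *)
Definition recovered (u : 'I_K) (f : 'I_N) (P : {set 'I_K}) : bool :=
  (u \in P) ||
  has (fun p => (0 < p)%N &&
        all (fun k => has (fun tx => decodes u tx (f, P, p, k)) delivery) (iota 0 p))
      all_parts.

Variables (R : realFieldType) (q r I : R).

(* typical length (in symbols) of Gamma_{omega,P}, q = M r / N *)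
Definition blen (P : {set 'I_K}) : R := q ^+ #|P| * (1 - q) ^+ (K - #|P|) * (I / r).

Definition known (u : 'I_K) : R :=
  \sum_(P : {set 'I_K} | recovered u (omega u) P) blen P.

(* length of a transmission (zero padding: max of the segment lengths) *)
Definition tx_len (tx : transmission) : R :=
  \big[Num.max/0]_(x <- tx.2) (blen (tset x) / (tparts x)%:R).

(* rate = transmitted bits / B = transmitted symbols / I *)
Definition rate : R := (\sum_(tx <- delivery) tx_len tx) / I.

End Scheme.

Section Formula.
Variables (R : realFieldType) (K S N : nat) (M r : R).

Definition root_poly : R :=
  \sum_(i < K - S) ('C(K - S, i))%:R * (- (M / N%:R)) ^+ (K - S - i)
                     * r ^+ (K - S - 1 - i) + 1.

Definition Rcoef (i : nat) : R :=
  \sum_(0 <= j < i.-1) ('C(S, j) * 'C(K - S, i - j))%:R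
                          * ((i - j)%:R / (i - j - 1)%:R)
  + (K - S)%:R * ('C(S, i.-1))%:R.

Definition rate_formula : R :=
  let q := M * r / N%:R in
  r^-1 * \sum_(2 <= i < K.+1) Rcoef i * q ^+ i.-1 * (1 - q) ^+ (K - i + 1).
End Formula.

From mathcomp Require Import all_boot all_order all_algebra zify ring lra.
Set Implicit Arguments.
Unset Strict Implicit.
Unset Printing Implicit Defensive.
Import Order.TTheory GRing.Theory Num.Theory.
Local Open Scope ring_scope.

(* User u caches the blocks Gamma_{w_u,P} with u in P. For every P containing a
   non-selfish user, u decodes each segment of Gamma_{w_u,P} from the transmissions
   of U = u |: P: every other block XORed with it is indexed by a set containing u.
   The blocks u misses are indexed by subsets of Sel \ {u}; with q = Mr/N their
   total typical length is at most (1 - q)^(K-S) I/r, and multiplying the defining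
   polynomial by r shows that r is a root exactly when 1 - (1 - q)^(K-S) = r, so u
   knows at least I encoded symbols of its file.
   For the rate, a served set U with t non-selfish users costs t/(t-1) blocks
   (one block if t = 1) of a set of |U| - 1 users, and C(S, j) C(K-S, i-j) sets U
   have |U| = i and |U :&: Sel| = j. *)

Lemma sum_partition_nat (V : nmodType) (T : finType) (P : pred T) (f : T -> nat)
    (F : T -> V) (n : nat) :
  (forall x, P x -> (f x <= n)%N) ->
  \sum_(x | P x) F x = \sum_(k < n.+1) \sum_(x | P x && (f x == k)) F x.
Proof.
move=> f_le; rewrite (partition_big (fun x => inord (f x) : 'I_n.+1) predT) //=.
apply: eq_bigr => k _; apply: eq_bigl => x.
by case Px: (P x) => //=; rewrite -val_eqE /= inordK // ltnS f_le.
Qed.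

Lemma sum_by_fibre_card (V : nmodType) (T : finType) (P : pred T) (f : T -> nat)
    (g : nat -> V) (n : nat) :
  (forall x, P x -> (f x <= n)%N) ->
  \sum_(x | P x) g (f x) = \sum_(k < n.+1) g k *+ #|[set x | P x & f x == k]|.
Proof.
move=> f_le; rewrite (sum_partition_nat _ f_le); apply: eq_bigr => k _.
rewrite -sumr_const; apply: eq_big => [x | x /andP[_ /eqP ->]] //.
by rewrite inE.
Qed.

Lemma sum_subsets_card (V : nmodType) (T : finType) (A : {set T}) (g : nat -> V) :
  \sum_(B : {set T} | B \subset A) g #|B| = \sum_(k < #|T|.+1) g k *+ 'C(#|A|, k).
Proof.
rewrite (sum_by_fibre_card _ (n := #|T|)) => [|B _]; last exact: max_card.
by apply: eq_bigr => k _; rewrite cards_draws.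
Qed.

Lemma sum_binomial_weights (R : comRingType) (n a : nat) (q : R) : (a <= n)%N ->
  \sum_(k < n.+1) q ^+ k * (1 - q) ^+ (n - k) *+ 'C(a, k) = (1 - q) ^+ (n - a).
Proof.
move=> le_an.
rewrite -(big_mkord xpredT (fun k => q ^+ k * (1 - q) ^+ (n - k) *+ 'C(a, k))).
rewrite (big_cat_nat _ (n := a.+1)) //=.
rewrite [X in _ + X]big1_seq ?addr0 => [|k]; last first.
  by rewrite mem_index_iota => /andP[_ /andP[lt_ak _]]; rewrite bin_small.
transitivity ((1 - q) ^+ (n - a) *
  \sum_(0 <= k < a.+1) (1 - q) ^+ (a - k) * q ^+ k *+ 'C(a, k)).
  rewrite big_distrr; apply: eq_big_nat => k /andP[_ le_ka] /=.
  by rewrite (_ : n - k = n - a + (a - k))%N ?exprD; [ring | lia].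
by rewrite big_mkord -exprDn subrK expr1n mulr1.
Qed.

Lemma sum_subset_weights (R : comRingType) (T : finType) (A : {set T}) (q : R) :
  \sum_(B : {set T} | B \subset A) q ^+ #|B| * (1 - q) ^+ (#|T| - #|B|)
    = (1 - q) ^+ (#|T| - #|A|).
Proof.
rewrite (sum_subsets_card _ (fun k => q ^+ k * (1 - q) ^+ (#|T| - k))).
exact/sum_binomial_weights/max_card.
Qed.

Lemma card_split_subsets (T : finType) (A : {set T}) (i j : nat) : (j <= i)%N ->
  #|[set B : {set T} | #|B| == i & #|B :&: A| == j]|
    = ('C(#|A|, j) * 'C(#|T| - #|A|, i - j))%N.
Proof.
move=> le_ji.
pose split (B : {set T}) := (B :&: A, B :\: A).
have split_inj : injective split.
  by move=> B C [eqI eqD]; rewrite -(setID B A) -(setID C A) eqI eqD.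
rewrite -(card_imset _ split_inj) (_ : split @: _ =
    setX [set B : {set T} | B \subset A & #|B| == j]
         [set C : {set T} | C \subset ~: A & #|C| == (i - j)%N]).
  by rewrite cardsX !cards_draws -(cardsC A) addKn.
apply/setP => -[B C]; rewrite !inE /=; apply/imsetP/andP => [[U] | []].
  rewrite inE => /andP[/eqP cardU /eqP cardUA] [-> ->].
  rewrite subsetIr setDE subsetIr cardUA -setDE -cardU -(cardsID A U) cardUA.
  by rewrite addKn !eqxx.
move=> /andP[BA /eqP cardB] /andP[CA /eqP cardC].
have capA : (B :|: C) :&: A = B.
  rewrite setIUl (setIidPl BA) (disjoint_setI0 _) ?setU0 //.
  by rewrite disjoints_subset.
have diffA : (B :|: C) :\: A = C.
  by rewrite setDUl (eqP (_ : B :\: A == set0)) ?set0U ?setD_eq0 // setDE (setIidPl CA).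
exists (B :|: C); last by rewrite /split capA diffA.
by rewrite inE -(cardsID A) capA diffA cardB cardC subnKC // !eqxx.
Qed.

Lemma bigmax_const_seq (R : realDomainType) (T : eqType) (s : seq T) (F : T -> R)
    (c : R) :
  0 <= c -> s != [::] -> {in s, forall x, F x = c} -> \big[Num.max/0]_(x <- s) F x = c.
Proof.
move=> c_ge0; elim: s => [//|x [|y s] IH] _ Fc; rewrite big_cons Fc ?mem_head //.
  by rewrite big_nil max_l.
by rewrite IH ?maxxx // => z zs; apply: Fc; rewrite in_cons zs orbT.
Qed.

(* A served set with t non-selfish users sends t segments of 1/(t-1) of a block,
   or one whole block when t = 1. *)
Definition tx_factor (R : fieldType) (t : nat) : R :=
  if t == 1%N then 1 else t%:R / t.-1%:R.

Lemma sum_tx_factor_binomial (R : realFieldType) (K S i : nat) : (1 < i)%N ->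
  \sum_(j < i) tx_factor R (i - j) *+ ('C(S, j) * 'C(K - S, i - j)) = Rcoef R K S i.
Proof.
case: i => [//|i] lt1i; rewrite big_ord_recr /= (subSnn i) /Rcoef big_mkord.
congr (_ + _).
  apply: eq_bigr => j _; rewrite /tx_factor ifN; first by rewrite subn1 [RHS]mulr_natl.
  by have := ltn_ord j; lia.
by rewrite /tx_factor eqxx bin1 natrM mulrC.
Qed.

Lemma mulr_root_poly (R : realFieldType) (K S N : nat) (M r : R) :
  r * root_poly K S N M r = (1 - M * r / N%:R) ^+ (K - S) - 1 + r.
Proof.
rewrite /root_poly mulrDr mulr1; congr (_ + _).
set n := (K - S)%N; set q := M * r / N%:R.
rewrite (addrC 1 (- q)) exprDn big_ord_recr /= (subnn n) expr0 binn mul1r expr1n addrK.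
rewrite big_distrr /=; apply: eq_bigr => i _.
have -> : (n - i = (n - 1 - i).+1)%N by have := ltn_ord i; lia.
have -> : - q = - (M / N%:R) * r by rewrite /q mulrAC mulNr.
by rewrite expr1n mulr1 !exprS exprMn; ring.
Qed.

Lemma decodes_own_segment {K N : nat} {omega : 'I_K -> 'I_N} (o : 'I_K -> nat)
    {U : {set 'I_K}} {s : seq 'I_K} {sender u : 'I_K} {p : nat} :
  u \in U -> u \in s ->
  decodes u (sender, [seq (omega v, U :\ v, p, o v) | v <- s]) (omega u, U :\ u, p, o u).
Proof.
move=> uU us; rewrite /decodes map_f //=; apply/allP => _ /mapP[v _ ->].
have [-> | neq_vu] := eqVneq v u; first by rewrite eqxx.
by rewrite /tset /= in_setD1 uU andbT [u == v]eq_sym neq_vu orbT.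
Qed.

Section Scheme.

Variables (K N : nat) (Sel : {set 'I_K}) (omega : 'I_K -> 'I_N)
  (ustar : {set 'I_K} -> 'I_K).

Lemma recovered_of_decodes (u : 'I_K) (f : 'I_N) (P : {set 'I_K}) (p : nat) :
  (0 < p)%N ->
  (forall k, (k < p)%N ->
     exists2 tx, tx \in delivery Sel omega ustar & decodes u tx (f, P, p, k)) ->
  recovered Sel omega ustar u f P.
Proof.
move=> p_gt0 dec; apply/orP; right; apply/hasP; exists p.
  have [tx tx_del /andP[x_tx _]] := dec 0%N p_gt0.
  by apply/mapP; exists (f, P, p, 0%N) => //; apply/flatten_mapP; exists tx.
rewrite p_gt0; apply/allP => k; rewrite mem_iota add0n => lt_kp.
by have [tx tx_del dec_k] := dec k lt_kp; apply/hasP; exists tx.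
Qed.

Lemma tx_of_in_delivery (U : {set 'I_K}) (tx : transmission K N) :
  (2 <= #|U|)%N -> nonselfish Sel U != set0 ->
  tx \in tx_of Sel omega ustar U -> tx \in delivery Sel omega ustar.
Proof.
move=> U2 T0 tx_U; apply/flatten_mapP; exists U => //.
by rewrite mem_filter /= U2 T0 mem_enum in_setT.
Qed.

Lemma recovered_one_sender (U : {set 'I_K}) (u : 'I_K) :
  (2 <= #|U|)%N -> #|nonselfish Sel U| = 1%N -> u \in U -> u != ustar U ->
  recovered Sel omega ustar u (omega u) (U :\ u).
Proof.
move=> U2 t1 uU neq_u; have T0 : nonselfish Sel U != set0 by rewrite -card_gt0 t1.
apply: (recovered_of_decodes (p := 1%N)) => // k; rewrite ltnS leqn0 => /eqP ->.
exists (ustar U, [seq (omega v, U :\ v, 1%N, 0%N) | v <- enum (U :\ ustar U)]).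
  by apply: tx_of_in_delivery U2 T0 _; rewrite /tx_of t1 eqxx mem_seq1.
by apply: (decodes_own_segment (fun=> 0%N)); rewrite // mem_enum !inE neq_u.
Qed.

Hypothesis ustar_nonselfish :
  forall U, nonselfish Sel U != set0 -> ustar U \in nonselfish Sel U.

Lemma recovered_many_senders (U : {set 'I_K}) (u : 'I_K) :
  (2 <= #|U|)%N -> (1 < #|nonselfish Sel U|)%N -> u \in U ->
  recovered Sel omega ustar u (omega u) (U :\ u).
Proof.
move=> U2 t2 uU; have T0 : nonselfish Sel U != set0 by rewrite -card_gt0 ltnW.
have card_Tr : #|nonselfish Sel U :\ ustar U| = (#|nonselfish Sel U|).-1.
  by rewrite (cardsD1 (ustar U) (nonselfish Sel U)) ustar_nonselfish.
move: t2 card_Tr; set t := #|nonselfish Sel U| => t2 card_Tr.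
set Tr := enum (nonselfish Sel U :\ ustar U).
have tx_ofE : tx_of Sel omega ustar U =
    (ustar U, [seq (omega w, U :\ w, t.-1, index w Tr) | w <- Tr])
    :: [seq (w, [seq (omega v, U :\ v, t.-1, index w Tr) | v <- enum (U :\ w)]) | w <- Tr].
  by rewrite /tx_of ifN // neq_ltn t2 orbT.
apply: (recovered_of_decodes (p := t.-1)) => [|k lt_kt]; first by lia.
(* The k-th segment is sent by ustar U if u is the k-th user of Tr, and by that
   user otherwise. *)
set w := nth u Tr k.
have wTr : w \in Tr by rewrite mem_nth // -cardE card_Tr.
have wU : w \in U by move: wTr; rewrite mem_enum !inE => /and3P[].
rewrite -(_ : index w Tr = k); last by rewrite index_uniq ?enum_uniq // -cardE card_Tr.
have [<- | neq_wu] := eqVneq w u.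
  exists (ustar U, [seq (omega w, U :\ w, t.-1, index w Tr) | w <- Tr]).
    by apply: tx_of_in_delivery U2 T0 _; rewrite tx_ofE mem_head.
  exact: (decodes_own_segment (fun w => index w Tr)).
exists (w, [seq (omega v, U :\ v, t.-1, index w Tr) | v <- enum (U :\ w)]).
  by apply: tx_of_in_delivery U2 T0 _; rewrite tx_ofE in_cons map_f ?orbT.
apply: (decodes_own_segment (fun=> index w Tr)) => //.
by rewrite mem_enum !inE eq_sym neq_wu.
Qed.

Lemma recovered_requested (u : 'I_K) (P : {set 'I_K}) : ~~ (P \subset Sel :\ u) ->
  recovered Sel omega ustar u (omega u) P.
Proof.
rewrite subsetD1 negb_and negbK orbC.
have [uP _ | uP /= /subsetPn[x xP xS]] := boolP (u \in P).
  by rewrite /recovered uP.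
pose U := u |: P.
have xT : x \in nonselfish Sel U by rewrite !inE xS xP orbT.
have T0 : nonselfish Sel U != set0 by apply/set0Pn; exists x.
have U2 : (2 <= #|U|)%N by rewrite cardsU1 uP ltnS card_gt0; apply/set0Pn; exists x.
rewrite -(setU1K uP) -/U; have [t1 | t_neq1] := eqVneq #|nonselfish Sel U| 1%N.
  apply: recovered_one_sender; rewrite ?setU11 //.
  have /cards1P[y Ty] : #|nonselfish Sel U| == 1%N by rewrite t1.
  move: (ustar_nonselfish T0) xT; rewrite Ty !inE => /eqP-> /eqP <-.
  by apply: contraNneq uP => ->.
apply: recovered_many_senders; rewrite ?setU11 //.
by rewrite ltn_neqAle eq_sym t_neq1 card_gt0.
Qed.

Variables (R : realFieldType) (q r I : R).
Hypotheses (q_ge0 : 0 <= q) (q_le1 : q <= 1) (Ir_ge0 : 0 <= I / r).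

Definition blen_card (k : nat) : R := q ^+ k * (1 - q) ^+ (K - k) * (I / r).

Lemma blen_card_ge0 (k : nat) : 0 <= blen_card k.
Proof. by rewrite /blen_card mulr_ge0 // mulr_ge0 ?exprn_ge0 ?subr_ge0. Qed.

Lemma sum_blen_subset (A : {set 'I_K}) :
  \sum_(P : {set 'I_K} | P \subset A) blen q r I P = (1 - q) ^+ (K - #|A|) * (I / r).
Proof. by have := sum_subset_weights A q; rewrite card_ord -big_distrl => <-. Qed.

Lemma known_ge_coverage (u : 'I_K) :
  (1 - (1 - q) ^+ (K - #|Sel|)) * (I / r) <= known Sel omega ustar q r I u.
Proof.
have total : \sum_(P : {set 'I_K}) blen q r I P = I / r.
  transitivity (\sum_(P : {set 'I_K} | P \subset setT) blen q r I P).
    by apply: eq_bigl => P; rewrite subsetT.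
  by rewrite sum_blen_subset cardsT card_ord subnn mul1r.
have missed : \sum_(P : {set 'I_K} | P \subset Sel :\ u) blen q r I P
    <= (1 - q) ^+ (K - #|Sel|) * (I / r).
  rewrite sum_blen_subset ler_wpM2r // ler_wiXn2l ?subr_ge0 ?lerBlDr ?lerDl //.
  exact/leq_sub2l/subset_leq_card/subD1set.
have recovered_ge : \sum_(P : {set 'I_K} | ~~ (P \subset Sel :\ u)) blen q r I P
    <= known Sel omega ustar q r I u.
  rewrite /known [leLHS]big_mkcond [leRHS]big_mkcond; apply: ler_sum => P _.
  case: ifP => [/recovered_requested -> // | _].
  by case: ifP => _; rewrite ?blen_card_ge0.
apply: le_trans recovered_ge.
have -> : \sum_(P : {set 'I_K} | ~~ (P \subset Sel :\ u)) blen q r I P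
    = I / r - \sum_(P : {set 'I_K} | P \subset Sel :\ u) blen q r I P.
  rewrite -total [X in _ = X - _](bigID (fun P : {set 'I_K} => P \subset Sel :\ u)).
  by rewrite /= addrAC subrr add0r.
by rewrite mulrBl mul1r lerD2l lerN2.
Qed.

Lemma blen_setD1 (U : {set 'I_K}) (v : 'I_K) :
  v \in U -> blen q r I (U :\ v) = blen_card #|U|.-1.
Proof. by move=> vU; rewrite /blen (cardsD1 v U) vU. Qed.

Lemma tx_len_segments (U : {set 'I_K}) (sender : 'I_K) (s : seq 'I_K) (p : nat)
    (o : 'I_K -> nat) :
  s != [::] -> {subset s <= U} ->
  tx_len q r I (sender, [seq (omega v, U :\ v, p, o v) | v <- s])
    = blen_card #|U|.-1 / p%:R.
Proof.
move=> s_neq0 sU; rewrite /tx_len big_map; apply: bigmax_const_seq => // [|v vs].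
  by rewrite divr_ge0 ?blen_card_ge0.
by rewrite /tset /tparts /= blen_setD1 ?sU.
Qed.

Lemma sum_tx_len_tx_of (U : {set 'I_K}) :
  (2 <= #|U|)%N -> nonselfish Sel U != set0 ->
  \sum_(tx <- tx_of Sel omega ustar U) tx_len q r I tx
    = tx_factor R #|nonselfish Sel U| * blen_card #|U|.-1.
Proof.
move=> U2 T0; have uT := ustar_nonselfish T0.
have uU : ustar U \in U by move: uT; rewrite inE => /andP[].
have enumD1_neq0 v : v \in U -> enum (U :\ v) != [::].
  by move=> vU; rewrite -size_eq0 -cardE -lt0n; move: U2; rewrite (cardsD1 v U) vU.
have enumD1_sub v : {subset enum (U :\ v) <= U}.
  by move=> w; rewrite mem_enum => /setD1P[].
have card_Tr : #|nonselfish Sel U :\ ustar U| = (#|nonselfish Sel U|).-1.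
  by rewrite (cardsD1 (ustar U) (nonselfish Sel U)) uT.
rewrite /tx_of /tx_factor; case: ifP => [_ | /negbT t_neq1].
  by rewrite big_seq1 tx_len_segments ?enumD1_neq0 // mul1r divr1.
move: card_Tr t_neq1; set t := #|nonselfish Sel U| => card_Tr t_neq1.
have t_gt1 : (1 < t)%N by rewrite ltn_neqAle eq_sym t_neq1 card_gt0.
set Tr := enum (nonselfish Sel U :\ ustar U).
have Tr_neq0 : Tr != [::] by rewrite -size_eq0 -cardE card_Tr; lia.
have Tr_sub : {subset Tr <= U} by move=> w; rewrite mem_enum !inE => /and3P[].
rewrite big_cons tx_len_segments // big_map big_enum /=.
rewrite (eq_bigr (fun=> blen_card #|U|.-1 / t.-1%:R)) => [|w]; last first.
  by rewrite !inE => /and3P[_ _ wU]; rewrite tx_len_segments ?enumD1_neq0.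
rewrite sumr_const card_Tr -mulrS prednK; last by lia.
by rewrite -[_ *+ t]mulr_natr; ring.
Qed.

(* [served_load #|U| #|U :&: Sel|] is the total length of the transmissions of U,
   and 0 when U is not served. *)
Definition served_load (i j : nat) : R :=
  if (1 < i)%N && (j < i)%N then tx_factor R (i - j) * blen_card i.-1 else 0.

Lemma card_nonselfish (U : {set 'I_K}) :
  #|nonselfish Sel U| = (#|U| - #|U :&: Sel|)%N.
Proof. by rewrite -(cardsID Sel U) addKn. Qed.

Lemma servedE (U : {set 'I_K}) :
  (2 <= #|U|)%N && (nonselfish Sel U != set0) = (1 < #|U|)%N && (#|U :&: Sel| < #|U|)%N.
Proof. by rewrite -card_gt0 card_nonselfish subn_gt0. Qed.

Lemma sum_delivery_tx_len :
  \sum_(tx <- delivery Sel omega ustar) tx_len q r I tx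
    = \sum_(U : {set 'I_K}) served_load #|U| #|U :&: Sel|.
Proof.
rewrite big_flatten big_map big_filter big_enum_cond big_mkcond /=.
apply: eq_bigr => U _; rewrite in_setT /= /served_load -servedE.
by case: ifP => // /andP[U2 T0]; rewrite sum_tx_len_tx_of // card_nonselfish.
Qed.

Lemma sum_served_load_card (i : nat) :
  \sum_(U : {set 'I_K} | #|U| == i) served_load #|U| #|U :&: Sel|
    = if (1 < i)%N then Rcoef R K #|Sel| i * blen_card i.-1 else 0.
Proof.
transitivity (\sum_(U : {set 'I_K} | #|U| == i) served_load i #|U :&: Sel|).
  by apply: eq_bigr => U /eqP ->.
rewrite (sum_by_fibre_card _ (n := i)) => [|U /eqP <-].
  2: exact/subset_leq_card/subsetIl.
rewrite big_ord_recr /= {2}/served_load ltnn andbF mul0rn addr0.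
have [lt1i | le_i1] := ltnP 1 i; last first.
  by rewrite big1 // => j _; rewrite /served_load ltnNge le_i1 mul0rn.
rewrite -(@sum_tx_factor_binomial R K #|Sel| i lt1i) mulr_suml; apply: eq_bigr => j _.
by rewrite /served_load lt1i ltn_ord card_split_subsets 1?ltnW // card_ord mulrnAl.
Qed.

Lemma rateE : I != 0 ->
  rate Sel omega ustar q r I
    = r^-1 * \sum_(2 <= i < K.+1) Rcoef R K #|Sel| i * q ^+ i.-1 * (1 - q) ^+ (K - i + 1).
Proof.
move=> I_neq0; rewrite /rate sum_delivery_tx_len.
rewrite (sum_partition_nat _ (n := K) (f := fun U : {set 'I_K} => #|U|)) => [|U _].
  2: by rewrite -[X in (_ <= X)%N]card_ord max_card.
under eq_bigr => i _ do rewrite /= sum_served_load_card.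
rewrite -big_mkcond big_geq_mkord /=.
rewrite (eq_bigr (fun i : 'I_K.+1 =>
    Rcoef R K #|Sel| i * q ^+ i.-1 * (1 - q) ^+ (K - i + 1) * (I / r))) => [|i lt1i].
  by rewrite -big_distrl /= -mulrA [I / r / I]mulrAC divff // mul1r mulrC.
by rewrite /blen_card !mulrA (_ : K - i.-1 = K - i + 1)%N //; have := ltn_ord i; lia.
Qed.

End Scheme.

Theorem theorem4 (R : realFieldType) (K S N : nat) (M r I : R)
  (Sel : {set 'I_K}) (omega : 'I_K -> 'I_N) (ustar : {set 'I_K} -> 'I_K) :
  #|Sel| = S ->
  (0 < N)%N -> 0 <= M -> M <= N%:R ->
  0 < r -> r < 1 ->
  root_poly K S N M r = 0 ->
  1 < M * (K - S)%:R / N%:R ->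
  (forall U, nonselfish Sel U != set0 -> ustar U \in nonselfish Sel U) ->
  0 < I ->
  (forall u : 'I_K,
     I <= known Sel omega ustar (M * r / N%:R) r I u) /\
  rate Sel omega ustar (M * r / N%:R) r I = rate_formula K S N M r.
Proof.
(* The hypothesis M(K-S)/N > 1 only guarantees that such a root r exists. *)
move=> card_Sel N_gt0 M_ge0 M_le_N r_gt0 r_lt1 root _ ustar_nonselfish I_gt0.
set q := M * r / N%:R.
have q_ge0 : 0 <= q by rewrite /q divr_ge0 // mulr_ge0 // ltW.
have q_le1 : q <= 1.
  rewrite /q ler_pdivrMr ?ltr0n // mul1r (le_trans _ M_le_N) //.
  by rewrite ler_piMr // ltW.
have Ir_ge0 : 0 <= I / r by rewrite divr_ge0 ?ltW.
have coverage : 1 - (1 - q) ^+ (K - S) = r.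
  by have := mulr_root_poly K S N M r; rewrite root mulr0; lra.
split=> [u | ].
  have := known_ge_coverage omega ustar_nonselfish q_ge0 q_le1 Ir_ge0 u.
  by rewrite card_Sel coverage mulrCA divff ?mulr1 ?lt0r_neq0.
by rewrite (rateE omega ustar_nonselfish q_ge0 q_le1 Ir_ge0 (lt0r_neq0 I_gt0)) card_Sel.
Qed.
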